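(* Let $G$ be a nilpotent Chernikov $p$-group whose top is an elementary abelian $p$-group and whose bottom is a single quasi-cyclic $p$-group $M$. Then $G\cong G_k\times H_l$ for some integers $k,l\ge0$, where $H_l$ is the elementary abelian $p$-group of rank $l$ and $G_k$ is the group generated by $M$ and $2k$ elements $\bar h_1,\dots,\bar h_{2k}$, each of order $p$ and commuting with all elements of $M$, whose commutators for $i<j$ are $[\bar h_i,\bar h_j]=a_1$ if $j=k+i$ and $[\bar h_i,\bar h_j]=0$ otherwise, $a_1$ being a fixed element of order $p$ of $M$.
   Context: A Chernikov $p$-group is an extension of a finite direct sum of quasi-cyclic $p$-groups (groups of type $p^\infty$; the bottom, which is the largest divisible abelian subgroup) by a finite $p$-group (the top). Groups are written additively and $[u,v]=u+v-u-v$. *)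

(* MathComp (boot only, for nat / prime).  Possibly infinite groups are
   given as an explicit carrier type with operations and axioms. *)
From mathcomp Require Import all_boot.
Set Implicit Arguments. Unset Strict Implicit. Unset Printing Implicit Defensive.

Record group := Group {
  carrier :> Type;
  gadd : carrier -> carrier -> carrier;
  gopp : carrier -> carrier;
  gzero : carrier;
  gaddA : forall x y z, gadd x (gadd y z) = gadd (gadd x y) z;
  gadd0 : forall x, gadd gzero x = x;
  gaddN : forall x, gadd (gopp x) x = gzero
}.

Section Defs.
Variable G : group.
Local Infix "+g" := gadd (at level 50, left associativity).
Local Notation "-g x" := (gopp x) (at level 35, right associativity).
Local Notation "0g" := (gzero G).

Fixpoint gmul (n : nat) (x : G) : G :=
  match n with O => 0g | S n => gmul n x +g x end.

Definition comm (u v : G) : G := u +g v +g -g u +g -g v.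

Fixpoint gsum (n : nat) (f : nat -> G) : G :=
  match n with O => 0g | S n => gsum n f +g f n end.

Definition subgroup (H : G -> Prop) : Prop :=
  H 0g /\ (forall x y, H x -> H y -> H (x +g y)) /\ (forall x, H x -> H (-g x)).

Definition normal (H : G -> Prop) : Prop :=
  subgroup H /\ forall g h, H h -> H (g +g h +g -g g).

Definition abelian_sub (H : G -> Prop) : Prop :=
  forall x y, H x -> H y -> x +g y = y +g x.

Definition divisible_sub (H : G -> Prop) : Prop :=
  forall x n, H x -> 0 < n -> exists y, H y /\ gmul n y = x.

Definition is_bottom (M : G -> Prop) : Prop :=
  subgroup M /\ abelian_sub M /\ divisible_sub M /\
  forall D, subgroup D -> abelian_sub D -> divisible_sub D ->
    forall x, D x -> M x.

(* M is a quasi-cyclic p-group (type p^oo): it is the union of the cyclic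
   subgroups <c_n>, where c_0 has order p and p.c_(n+1) = c_n. *)
Definition quasi_cyclic (p : nat) (M : G -> Prop) : Prop :=
  exists c : nat -> G,
    c 0 <> 0g /\ gmul p (c 0) = 0g /\ (forall n, gmul p (c n.+1) = c n) /\
    forall g, M g <-> exists n a, g = gmul a (c n).

(* G/M is a finite elementary abelian p-group *)
Definition top_finite_elem_abelian (p : nat) (M : G -> Prop) : Prop :=
  (exists (n : nat) (t : nat -> G), forall g, exists2 i, i < n & M (-g t i +g g)) /\
  (forall g, M (gmul p g)) /\
  (forall g h, M (comm g h)).

Fixpoint zeta (n : nat) : G -> Prop :=
  match n with
  | O => fun g => g = 0g
  | S n => fun g => forall x, zeta n (comm g x)
  end.

Definition nilpotent : Prop := exists n, forall g, zeta n g.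

Definition has_order (p : nat) (x : G) : Prop := gmul p x = 0g /\ x <> 0g.

(* G = G_k x H_l, in terms of generators: h_0..h_(2k-1) generate G_k together
   with M, e_0..e_(l-1) are a basis of H_l, and every element of G has a
   unique normal form m + sum x_i h_i + sum y_j e_j, with 0 <= x_i,y_j < p. *)
Definition Gk_times_Hl (p : nat) (M : G -> Prop) (a1 : G) (k l : nat)
    (h e : nat -> G) : Prop :=
  (forall i, i < 2 * k -> has_order p (h i)) /\
  (forall i m, i < 2 * k -> M m -> h i +g m = m +g h i) /\
  (forall i j, i < j -> j < 2 * k ->
      comm (h i) (h j) = if j == k + i then a1 else 0g) /\
  (forall i, i < l -> has_order p (e i)) /\
  (forall i m, i < l -> M m -> e i +g m = m +g e i) /\
  (forall i j, i < l -> j < 2 * k -> e i +g h j = h j +g e i) /\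
  (forall i j, i < l -> j < l -> e i +g e j = e j +g e i) /\
  (forall g, exists m x y, M m /\ (forall i, x i < p) /\ (forall i, y i < p) /\
      g = m +g gsum (2 * k) (fun i => gmul (x i) (h i))
            +g gsum l (fun i => gmul (y i) (e i))) /\
  (forall m x y m' x' y', M m -> M m' ->
      (forall i, x i < p) -> (forall i, y i < p) ->
      (forall i, x' i < p) -> (forall i, y' i < p) ->
      m +g gsum (2 * k) (fun i => gmul (x i) (h i))
        +g gsum l (fun i => gmul (y i) (e i)) =
      m' +g gsum (2 * k) (fun i => gmul (x' i) (h i))
        +g gsum l (fun i => gmul (y' i) (e i)) ->
      m = m' /\ (forall i, i < 2 * k -> x i = x' i) /\
      (forall i, i < l -> y i = y' i)).

End Defs.

(* Since M is quasi-cyclic, the image of a nonzero additive endomorphism of M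
   is a nontrivial divisible subgroup, hence all of M.  For g in G the map
   [_, g] is such an endomorphism (M is abelian and normal); its iterates
   vanish because G is nilpotent, so it is zero and M is central.
   As G/M is elementary abelian, [x, y] lies in M and has order p, so it is a
   multiple w(x, y) of the element a1 of order p of M; w is an alternating
   bilinear form on the F_p-space G/M.  A symplectic (Darboux) basis of G/M
   for w, lifted to elements of order p (every coset contains one because M
   is divisible), gives the generators h_i and e_j, and the uniqueness of
   coordinates in G/M gives the uniqueness of the normal form. *)

From HB Require Import structures.
From mathcomp Require Import all_boot all_algebra.
From mathcomp Require Import zify.
From mathcomp Require Import boolp.
From Stdlib Require Import Classical ClassicalEpsilon.
Set Implicit Arguments. Unset Strict Implicit. Unset Printing Implicit Defensive.
Import GRing.Theory.

Local Infix "+g" := gadd (at level 50, left associativity).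
Local Notation "-g x" := (gopp x) (at level 35, right associativity).

Section GroupFacts.
Variable G : group.
Local Notation "0g" := (gzero G).
Implicit Types x y z : G.

Lemma gaddrN x : x +g -g x = 0g.
Proof.
have e: x +g -g x = (-g -g x +g -g x) +g (x +g -g x) by rewrite gaddN gadd0.
by rewrite e -gaddA (gaddA (-g x)) gaddN gadd0 gaddN.
Qed.
Lemma gaddr0 x : x +g 0g = x.
Proof. by rewrite -(gaddN x) gaddA gaddrN gadd0. Qed.
Lemma gaddKr x y : -g x +g (x +g y) = y.
Proof. by rewrite gaddA gaddN gadd0. Qed.
Lemma gaddNKr x y : x +g (-g x +g y) = y.
Proof. by rewrite gaddA gaddrN gadd0. Qed.
Lemma gaddrK x y : x +g y +g -g y = x.
Proof. by rewrite -gaddA gaddrN gaddr0. Qed.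
Lemma gaddrNK x y : x +g -g y +g y = x.
Proof. by rewrite -gaddA gaddN gaddr0. Qed.
Lemma gaddrI x y z : x +g y = x +g z -> y = z.
Proof. by move=> e; rewrite -(gaddKr x y) e gaddKr. Qed.
Lemma gaddIr x y z : y +g x = z +g x -> y = z.
Proof. by move=> e; rewrite -(gaddrK y x) e gaddrK. Qed.
Lemma goppK x : -g -g x = x.
Proof. by apply: (@gaddIr (-g x)); rewrite gaddN gaddrN. Qed.
Lemma goppD x y : -g (x +g y) = -g y +g -g x.
Proof. by apply: (@gaddIr (x +g y)); rewrite gaddN gaddA gaddrNK gaddN. Qed.
Lemma gopp0 : -g 0g = 0g.
Proof. by rewrite -{2}(gaddN 0g) gaddr0. Qed.
Lemma gsubr0_eq x y : x +g -g y = 0g -> x = y.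
Proof. by move=> e; rewrite -(gaddrNK x y) e gadd0. Qed.

Lemma comm_eq0 x y : (comm x y = 0g) <-> (x +g y = y +g x).
Proof.
split; rewrite /comm; last by move=> ->; rewrite gaddrK gaddrN.
by move/gsubr0_eq => e; rewrite -(gaddrNK (x +g y) x) e.
Qed.
Lemma commC x y : comm y x = -g comm x y.
Proof. by rewrite /comm !goppD !goppK !gaddA. Qed.
Lemma commDl x y z : comm (x +g y) z = x +g comm y z +g -g x +g comm x z.
Proof. by rewrite /comm goppD !gaddA !gaddrNK. Qed.
Lemma commxx x : comm x x = 0g.
Proof. exact/comm_eq0. Qed.

Lemma gmulD a b x : gmul (a + b) x = gmul a x +g gmul b x.
Proof. by elim: b => [|b IH]; rewrite ?addn0 ?gaddr0 // addnS /= IH gaddA. Qed.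
Lemma gmulM a b x : gmul (a * b) x = gmul a (gmul b x).
Proof. by elim: a => [|a IH] //; rewrite mulSnr gmulD IH. Qed.
Lemma gmul1 x : gmul 1 x = x.
Proof. exact: gadd0. Qed.
Lemma gmul0 n : gmul n 0g = 0g.
Proof. by elim: n => //= n ->; rewrite gadd0. Qed.
Lemma gmul_commute n x y : x +g y = y +g x -> gmul n x +g y = y +g gmul n x.
Proof.
move=> cxy; elim: n => [|n IHn] /=; first by rewrite gadd0 gaddr0.
by rewrite -gaddA cxy gaddA IHn -gaddA.
Qed.
Lemma gmulDl n x y : x +g y = y +g x -> gmul n (x +g y) = gmul n x +g gmul n y.
Proof.
move=> cxy; elim: n => [|n IH] /=; first by rewrite gadd0.
by rewrite IH !gaddA -(gaddA (gmul n x)) (gmul_commute n (esym cxy)) gaddA.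
Qed.
Lemma gmulN n x : gmul n (-g x) = -g gmul n x.
Proof.
elim: n => [|n IH] /=; first by rewrite gopp0.
by rewrite IH -goppD (gmul_commute n (erefl (x +g x))).
Qed.

Lemma gsum_eq n (f g : nat -> G) :
  (forall i, i < n -> f i = g i) -> gsum n f = gsum n g.
Proof. by elim: n => [|n IH] e //=; rewrite e // IH // => i /ltnW /e. Qed.

Lemma zeta_iter_comm (g : G) n j x :
  @zeta G (n + j) x -> @zeta G j (iter n (fun y => comm y g) x).
Proof. by elim: n x => [|n IH] x //= /(_ g) /IH; rewrite -iterSr. Qed.

Lemma nilpotent_iter_comm (g : G) :
  nilpotent G -> exists N, forall x, iter N (fun y => comm y g) x = 0g.
Proof.
by case=> N zN; exists N => x; have := @zeta_iter_comm g N 0 x; rewrite addn0; apply.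
Qed.

End GroupFacts.

Section QuasiCyclic.
Variables (G : group) (p : nat) (M : G -> Prop) (c : nat -> G).
Local Notation "0g" := (gzero G).
Hypothesis p_pr : prime p.
Hypothesis c0_neq0 : c 0 <> 0g.
Hypothesis c0_order : gmul p (c 0) = 0g.
Hypothesis cS : forall n, gmul p (c n.+1) = c n.
Hypothesis MP : forall g, M g <-> exists n a, g = gmul a (c n).

Let expn_p_gt0 n : 0 < p ^ n.
Proof. by rewrite expn_gt0 prime_gt0. Qed.

Lemma gmul_expn_c s n : gmul (p ^ s) (c (n + s)) = c n.
Proof.
elim: s => [|s IH]; first by rewrite addn0 gmul1.
by rewrite expnSr gmulM addnS cS IH.
Qed.

Lemma gmul_c_eq0 a n : p ^ n.+1 %| a -> gmul a (c n) = 0g.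
Proof.
case/dvdnP=> q ->.
by rewrite gmulM expnS gmulM -{2}[n]add0n gmul_expn_c c0_order gmul0.
Qed.

Lemma coprime_gmul_c u t : coprime p u -> exists a, c t +g gmul a (gmul u (c t)) = 0g.
Proof.
move=> pu; have pt_u : coprime (p ^ t.+1) u by rewrite coprimeXl.
have [a _] := Bezoutl u (expn_p_gt0 t.+1).
by rewrite (eqP pt_u) => /gmul_c_eq0; rewrite gmulD gmul1 gmulM; exists a.
Qed.

Lemma quasi_cyclic_elem z :
  M z -> z = 0g \/ exists u t, coprime p u /\ z = gmul u (c t).
Proof.
case/MP=> n [a ->]; have [->|a_gt0] := posnP a; first by left.
have [u pu ->] := pfactor_coprime p_pr a_gt0.
have [sn|ns] := leqP (logn p a) n.
  by right; exists u, (n - logn p a); rewrite gmulM -{1}(subnK sn) gmul_expn_c.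
by left; apply/gmul_c_eq0/dvdn_mull/dvdn_exp2l.
Qed.

Lemma divisible_sub_full (D : G -> Prop) :
  subgroup D -> divisible_sub D -> (forall x, D x -> M x) ->
  forall x0, D x0 -> x0 <> 0g -> forall m, M m -> D m.
Proof.
move=> [D0 [DD DN]] Ddiv DM x0 Dx0 x0_neq0.
have Dmul n x : D x -> D (gmul n x) by move=> Dx; elim: n => //= n IH; exact: DD.
suff Dc J : D (c J) by move=> m /MP [n [a ->]]; exact: Dmul.
have [y [Dy ey]] := Ddiv x0 (p ^ J) Dx0 (expn_p_gt0 J).
have [y0|[u [t [pu yut]]]] := quasi_cyclic_elem (DM _ Dy).
  by case: x0_neq0; rewrite -ey y0 gmul0.
have [Jt|tJ] := leqP J t; last first.
  by case: x0_neq0; rewrite -ey yut -gmulM; apply/gmul_c_eq0/dvdn_mulr/dvdn_exp2l.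
have [a ea] := coprime_gmul_c t pu.
have Dct : D (c t).
  suff -> : c t = -g gmul a y by apply/DN/Dmul.
  by apply: (@gaddIr _ (gmul a y)); rewrite gaddN yut.
by rewrite -(gmul_expn_c (t - J) J) subnKC //; apply: Dmul.
Qed.

Lemma gmul_c0_eq0 n : gmul n (c 0) = 0g -> p %| n.
Proof.
move=> e; apply: contraT => pn; have pn' : coprime p n by rewrite prime_coprime.
have [a] := coprime_gmul_c 0 pn'.
by rewrite e gmul0 gaddr0.
Qed.

Lemma gmul_c0_mod n : gmul n (c 0) = gmul (n %% p) (c 0).
Proof. by rewrite {1}(divn_eq n p) gmulD gmulM c0_order gmul0 gadd0. Qed.

Lemma gmul_c0_inj n m : gmul n (c 0) = gmul m (c 0) -> n = m %[mod p].
Proof.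
wlog nm : n m / n <= m.
  by move=> W; case: (leqP n m) => h e; [apply: W|symmetry; apply: W => //; apply: ltnW].
move=> e; apply/eqP; rewrite eq_sym eqn_mod_dvd //; apply: gmul_c0_eq0.
by apply: (@gaddrI _ (gmul n (c 0))); rewrite -gmulD subnKC // gaddr0.
Qed.

Lemma quasi_cyclic_socle z : M z -> gmul p z = 0g -> exists n, z = gmul n (c 0).
Proof.
move=> Mz; have [->|[u [[|t] [pu ->]]]] := quasi_cyclic_elem Mz; first by exists 0.
  by exists u.
rewrite -gmulM mulnC gmulM cS => e; exfalso.
have [a] := coprime_gmul_c t pu; rewrite e gmul0 gaddr0 => ct.
by apply: c0_neq0; rewrite -[0]add0n -(gmul_expn_c t 0) add0n ct gmul0.
Qed.

End QuasiCyclic.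

Section BottomCentral.
Variables (G : group) (p : nat) (M : G -> Prop) (c : nat -> G).
Local Notation "0g" := (gzero G).
Hypothesis p_pr : prime p.
Hypothesis c0_neq0 : c 0 <> 0g.
Hypothesis c0_order : gmul p (c 0) = 0g.
Hypothesis cS : forall n, gmul p (c n.+1) = c n.
Hypothesis MP : forall g, M g <-> exists n a, g = gmul a (c n).
Hypothesis M_normal : normal M.
Hypothesis M_abelian : abelian_sub M.
Hypothesis M_divisible : divisible_sub M.

Let M0 : M 0g. Proof. by case: M_normal => [[]]. Qed.
Let MD x y : M x -> M y -> M (x +g y). Proof. by case: M_normal => [[_ [MD _]] _]; apply: MD. Qed.
Let MN x : M x -> M (-g x). Proof. by case: M_normal => [[_ [_ MN]] _]; apply: MN. Qed.
Let MJ g x : M x -> M (g +g x +g -g g). Proof. by case: M_normal => _; apply. Qed.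

Lemma endo_quasi_cyclic_surj (f : G -> G) :
  (forall x, M x -> M (f x)) ->
  (forall x y, M x -> M y -> f (x +g y) = f x +g f y) ->
  (exists2 x, M x & f x <> 0g) -> forall m, M m -> exists2 x, M x & f x = m.
Proof.
move=> fM fD [x0 Mx0 fx0] m Mm.
have f0 : f 0g = 0g by apply: (@gaddrI _ (f 0g)); rewrite -fD // !gaddr0.
have fN x : M x -> f (-g x) = -g f x.
  by move=> Mx; apply: (@gaddIr _ (f x)); rewrite -fD ?gaddN //; apply: MN.
have fmul n x : M x -> f (gmul n x) = gmul n (f x).
  move=> Mx; have Mmul j : M (gmul j x) by elim: j => //= j IHj; apply: MD.
  by elim: n => //= n IH; rewrite fD ?IH.
pose D y := exists2 x, M x & f x = y.
apply: (divisible_sub_full p_pr c0_order cS MP (D := D) _ _ _ (x0 := f x0)) => //.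
- split; first by exists 0g.
  split; first by move=> _ _ [x Mx <-] [y My <-]; exists (x +g y); rewrite ?fD //; apply: MD.
  by move=> _ [x Mx <-]; exists (-g x); rewrite ?fN //; apply: MN.
- move=> _ n [x Mx <-] n_gt0; have [y [My <-]] := M_divisible Mx n_gt0.
  by exists (f y); split; [exists y | rewrite fmul].
- by move=> _ [x Mx <-]; apply: fM.
- by exists x0.
Qed.

Lemma comm_inM g x : M x -> M (comm x g).
Proof.
move=> Mx; have -> : comm x g = x +g (g +g -g x +g -g g) by rewrite /comm !gaddA.
by apply: MD => //; apply/MJ/MN.
Qed.

Lemma comm_additive_onM g x y : M x -> M y -> comm (x +g y) g = comm x g +g comm y g.
Proof.
move=> Mx My; have Myg := comm_inM g My.
by rewrite commDl (M_abelian Mx Myg) gaddrK; apply: M_abelian => //; apply: comm_inM.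
Qed.

Hypothesis G_nilpotent : nilpotent G.

Lemma bottom_central g m : M m -> m +g g = g +g m.
Proof.
move=> Mm; apply/comm_eq0; apply: NNPP => gm_neq0.
pose f x := comm x g.
have f_surj := endo_quasi_cyclic_surj (@comm_inM g) (@comm_additive_onM g)
  (ex_intro2 _ _ m Mm gm_neq0).
have [N fN0] := nilpotent_iter_comm g G_nilpotent.
have iter_surj n y : M y -> exists2 x, M x & iter n f x = y.
  elim: n y => [|n IH] y My; first by exists y.
  have [z Mz <-] := f_surj y My; have [x Mx <-] := IH z Mz.
  by exists x.
have Mc0 : M (c 0) by apply/MP; exists 0, 1; rewrite gmul1.
have [x _ ex] := iter_surj N _ Mc0.
by apply: c0_neq0; rewrite -ex; apply: fN0.
Qed.

End BottomCentral.

Record abelian_quotient (G : group) (M : G -> Prop) : Prop := AbelianQuotient {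
  aq_normal : normal M;
  aq_comm : forall g h, M (comm g h)
}.

Definition congM (G : group) (M : G -> Prop) (x y : G) := M (-g x +g y).

Definition coset_repr (G : group) (M : G -> Prop) (g : G) : G :=
  epsilon (inhabits (gzero G)) (fun r => congM M r g).

Section CosetCongruence.
Variables (G : group) (M : G -> Prop) (H : abelian_quotient M).
Local Notation "0g" := (gzero G).
Implicit Types x y z : G.

Let MD x y : M x -> M y -> M (x +g y).
Proof. by case: H => [[[_ [MD _]] _]] _; apply: MD. Qed.
Let MN x : M x -> M (-g x).
Proof. by case: H => [[[_ [_ MN]] _]] _; apply: MN. Qed.
Let MJ g x : M x -> M (g +g x +g -g g).
Proof. by case: H => [[_ MJ]] _; apply: MJ. Qed.

Lemma congM_refl x : congM M x x.
Proof. by rewrite /congM gaddN; case: H => [[[]]]. Qed.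
Lemma congM_sym x y : congM M x y -> congM M y x.
Proof. by rewrite /congM => /MN; rewrite goppD goppK. Qed.
Lemma congM_trans x y z : congM M x y -> congM M y z -> congM M x z.
Proof. by rewrite /congM => /MD H1 /H1; rewrite -gaddA gaddNKr. Qed.
Lemma congM_add x y x' y' :
  congM M x x' -> congM M y y' -> congM M (x +g y) (x' +g y').
Proof.
rewrite /congM goppD => Mx My.
have -> : -g y +g -g x +g (x' +g y') = (-g y +g (-g x +g x') +g -g (-g y)) +g (-g y +g y').
  by rewrite goppK !gaddA gaddrK.
by apply: MD => //; apply: MJ.
Qed.
Lemma congM_opp x x' : congM M x x' -> congM M (-g x) (-g x').
Proof.
rewrite /congM goppK => Mx.
have -> : x +g -g x' = x +g (-g (-g x +g x')) +g -g x by rewrite goppD goppK gaddA gaddrK.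
by apply/MJ/MN.
Qed.
Lemma congM0 x : congM M x 0g <-> M x.
Proof.
rewrite /congM gaddr0; split; last exact: MN.
by move/MN; rewrite goppK.
Qed.
Lemma congM_addC x y : congM M (x +g y) (y +g x).
Proof.
rewrite /congM goppD.
have -> : -g y +g -g x +g (y +g x) = comm (-g y) (-g x) by rewrite /comm !goppK !gaddA.
exact: aq_comm.
Qed.

Lemma coset_reprP g : congM M (coset_repr M g) g.
Proof.
apply: (epsilon_spec (inhabits 0g) (fun r => congM M r g)).
by exists g; apply: congM_refl.
Qed.
Lemma coset_repr_eq x y : congM M x y -> coset_repr M x = coset_repr M y.
Proof.
move=> xy; rewrite /coset_repr; congr epsilon; apply: funext => r.
apply: propext; split => [rx|ry]; first exact: congM_trans rx xy.
exact: congM_trans ry (congM_sym xy).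
Qed.
Lemma coset_repr_id g : coset_repr M (coset_repr M g) = coset_repr M g.
Proof. exact/coset_repr_eq/coset_reprP. Qed.

End CosetCongruence.

Definition quot (G : group) (M : G -> Prop) (H : abelian_quotient M) :=
  {r : G | coset_repr M r = r}.

Section Quotient.
Variables (G : group) (M : G -> Prop) (H : abelian_quotient M).
Local Notation "0g" := (gzero G).
Local Notation Q := (quot H).

Definition qproj (g : G) : Q := exist _ (coset_repr M g) (coset_repr_id H g).
Definition qval (q : Q) : G := proj1_sig q.

Lemma qval_qproj g : congM M (qval (qproj g)) g.
Proof. exact: coset_reprP. Qed.

Lemma qprojP x y : qproj x = qproj y <-> congM M x y.
Proof.
split=> [e|xy].
  by apply: (congM_trans H (congM_sym H (qval_qproj x))); rewrite e; apply: qval_qproj.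
rewrite /qproj; move: (coset_repr_id H x) (coset_repr_id H y).
by rewrite (coset_repr_eq H xy) => p1 p2; congr exist; apply: Prop_irrelevance.
Qed.

Lemma qvalK : cancel qval qproj.
Proof.
case=> r r_id; rewrite /qproj /qval /=; move: (coset_repr_id H r); rewrite r_id => p1.
by congr exist; apply: Prop_irrelevance.
Qed.

Definition qadd (a b : Q) := qproj (qval a +g qval b).
Definition qopp (a : Q) := qproj (-g qval a).
Definition qzero := qproj 0g.

Lemma qproj_qadd x y : qproj (x +g y) = qadd (qproj x) (qproj y).
Proof. by apply/qprojP/(congM_add H); apply/(congM_sym H)/qval_qproj. Qed.
Lemma qproj_qopp x : qproj (-g x) = qopp (qproj x).
Proof. by apply/qprojP/(congM_opp H); apply/(congM_sym H)/qval_qproj. Qed.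

Lemma qaddA : associative qadd.
Proof.
move=> a b c; rewrite -[a]qvalK -[b]qvalK -[c]qvalK -!qproj_qadd gaddA.
exact/qprojP/(congM_refl H).
Qed.
Lemma qaddC : commutative qadd.
Proof. by move=> a b; rewrite -[a]qvalK -[b]qvalK -!qproj_qadd; apply/qprojP/(congM_addC H). Qed.
Lemma qadd0 : left_id qzero qadd.
Proof. by move=> a; rewrite -[a]qvalK -qproj_qadd gadd0. Qed.
Lemma qaddN : left_inverse qzero qopp qadd.
Proof. by move=> a; rewrite -[a]qvalK -qproj_qopp -qproj_qadd gaddN. Qed.

End Quotient.

HB.instance Definition _ (G : group) (M : G -> Prop) (H : abelian_quotient M) :=
  gen_eqMixin (quot H).
HB.instance Definition _ (G : group) (M : G -> Prop) (H : abelian_quotient M) :=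
  gen_choiceMixin (quot H).
HB.instance Definition _ (G : group) (M : G -> Prop) (H : abelian_quotient M) :=
  GRing.isZmodule.Build (quot H) (@qaddA G M H) (@qaddC G M H) (@qadd0 G M H) (@qaddN G M H).

Section QuotientProjection.
Variables (G : group) (M : G -> Prop) (H : abelian_quotient M).
Local Open Scope ring_scope.

Lemma qprojD (x y : G) : qproj H (x +g y) = qproj H x + qproj H y.
Proof. exact: qproj_qadd. Qed.
Lemma qprojN (x : G) : qproj H (-g x) = - qproj H x.
Proof. exact: qproj_qopp. Qed.
Lemma qproj_eq0 (x : G) : qproj H x = 0 <-> M x.
Proof. by rewrite -(congM0 H); apply: qprojP. Qed.
Lemma qproj_gmul n (x : G) : qproj H (gmul n x) = qproj H x *+ n.
Proof. by elim: n => [|n IH] //=; rewrite qprojD IH mulrSr. Qed.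
Lemma qproj_gsum n (f : nat -> G) :
  qproj H (gsum n f) = \sum_(0 <= i < n) qproj H (f i).
Proof.
elim: n => [|n IH] /=; first by rewrite big_geq.
by rewrite qprojD IH big_nat_recr.
Qed.

Lemma qproj_enumerates n (t : nat -> G) :
  (forall g, exists2 i, (i < n)%N & M (-g t i +g g)) ->
  forall q : quot H, exists2 i, (i < n)%N & q = qproj H (t i).
Proof.
move=> tM q; have [i iN Mi] := tM (qval q).
by exists i => //; rewrite -[q]qvalK; apply/qprojP/(congM_sym H).
Qed.

End QuotientProjection.

Local Open Scope ring_scope.

Definition catf (T : Type) n (f g : nat -> T) i := if (i < n)%N then f i else g (i - n)%N.

Section LinearCombinations.
Variable Q : zmodType.

Definition lincomb n (F : nat -> Q) (x : nat -> nat) := \sum_(0 <= i < n) F i *+ x i.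

Lemma eq_lincomb n F F' x x' :
  (forall i, (i < n)%N -> F i = F' i /\ x i = x' i) -> lincomb n F x = lincomb n F' x'.
Proof. by move=> e; apply: eq_big_nat => i /andP [_ /e [-> ->]]. Qed.
Lemma lincombD n F x y : lincomb n F x + lincomb n F y = lincomb n F (fun i => x i + y i)%N.
Proof. by rewrite /lincomb -big_split; apply: eq_bigr => i _; rewrite mulrnDr. Qed.
Lemma lincombMn n F x b : lincomb n F x *+ b = lincomb n F (fun i => x i * b)%N.
Proof. by rewrite /lincomb -sumrMnl; apply: eq_bigr => i _; rewrite mulrnA. Qed.
Lemma lincomb_delta n F j : (j < n)%N -> lincomb n F (fun i => (i == j)%N : nat) = F j.
Proof.
move=> jn; rewrite /lincomb (bigD1_seq j) ?mem_index_iota ?iota_uniq // eqxx mulr1n.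
by rewrite big1 => [|i /negPf ->]; [exact: addr0 | exact: mulr0n].
Qed.

Lemma lincomb_catf n m f g x :
  lincomb (n + m) (catf n f g) x =
  lincomb n f x + lincomb m g (fun i => x (n + i)%N).
Proof.
rewrite /lincomb (@big_cat_nat _ _ _ n 0 (n + m)) ?leq_addr //=; congr (_ + _).
  by apply: eq_big_nat => i /andP [_ ilt]; rewrite /catf ilt.
rewrite -{1}[n]add0n big_addn addKn; apply: eq_big_nat => i _.
by rewrite /catf ltnNge leq_addl /= addnK addnC.
Qed.

Lemma lincomb_catf1 n (F : nat -> Q) (y : Q) x :
  lincomb n.+1 (catf n F (fun=> y)) x = lincomb n F x + y *+ x n.
Proof. by rewrite -addn1 lincomb_catf /lincomb big_nat1 addn0. Qed.

Definition zmod_sub (K : Q -> Prop) :=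
  K 0 /\ (forall x y, K x -> K y -> K (x + y)) /\ (forall x, K x -> K (- x)).
Lemma zmod_sub_mulrn K x n : zmod_sub K -> K x -> K (x *+ n).
Proof. by case=> K0 [KD _] Kx; elim: n => [|n IH]; rewrite ?mulr0n ?mulrS //; apply: KD. Qed.

Definition enumerates (K : Q -> Prop) (t : nat -> Q) N :=
  forall x, K x -> exists2 i, (i < N)%N & x = t i.
Lemma enumerates_skip (K K' : Q -> Prop) t N j0 :
  enumerates K t N -> (j0 < N)%N -> (forall x, K' x -> K x /\ x <> t j0) ->
  enumerates K' (fun i => t (if (i < j0)%N then i else i.+1)) N.-1.
Proof.
move=> tK j0N K'K g /K'K [/tK [i iN ->] ti_neq].
have ij0 : i != j0 by apply: contra_not_neq ti_neq => ->.
exists (if (i < j0)%N then i else i.-1); first by case: ifP; lia.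
case: (ltnP i j0) => [-> //|j0i]; rewrite ifF; last by lia.
by congr t; lia.
Qed.

Definition spans (K : Q -> Prop) n (F : nat -> Q) := forall g, K g -> exists x, g = lincomb n F x.
End LinearCombinations.

Lemma modp_inverse p a : prime p -> ~~ (p %| a)%N -> exists b, (p %| a * b + 1)%N.
Proof.
move=> p_pr pa; have [b _] := Bezoutl a (prime_gt0 p_pr).
by rewrite (eqP (_ : coprime p a)) ?prime_coprime // addnC mulnC; exists b.
Qed.

Section ElementaryAbelian.
Variables (Q : zmodType) (p : nat).
Hypothesis p_pr : prime p.
Hypothesis Q_exp : forall x : Q, x *+ p = 0.

Lemma mulrn_modp (x : Q) n : x *+ n = x *+ (n %% p).
Proof. by rewrite {1}(divn_eq n p) mulrnDr mulrnA Q_exp add0r. Qed.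
Lemma mulrn_dvdp (x : Q) n : (p %| n)%N -> x *+ n = 0.
Proof. by move=> pn; rewrite mulrn_modp (eqP pn). Qed.

Lemma oppr_mulrn (x : Q) : - x = x *+ p.-1.
Proof.
apply: (@addrI _ x); rewrite subrr -mulrS prednK ?Q_exp //; exact: prime_gt0.
Qed.

Definition independent n (F : nat -> Q) :=
  forall x, lincomb n F x = 0 -> forall i, (i < n)%N -> (p %| x i)%N.

Lemma independent_neq0 n F i : independent n F -> (i < n)%N -> F i <> 0.
Proof.
move=> indF iN Fi0; have /indF /(_ i iN) : lincomb n F (fun j => (j == i)%N : nat) = 0.
  by rewrite lincomb_delta.
by rewrite eqxx dvdn1 => /eqP p1; move: p_pr; rewrite p1.
Qed.

Lemma independent_catf1 l (e : nat -> Q) (y : Q) :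
  independent l e -> ~ (exists x, y = lincomb l e x) -> independent l.+1 (catf l e (fun=> y)).
Proof.
move=> indep_e y_notin x; rewrite lincomb_catf1 => ex0 i.
have [pxl|pxl] := boolP (p %| x l)%N.
  rewrite (mulrn_dvdp _ pxl) addr0 in ex0.
  by rewrite ltnS leq_eqVlt => /orP [/eqP -> //|]; apply: indep_e ex0 i.
have [b pb] := modp_inverse p_pr pxl; case: y_notin; exists (fun i => x i * b)%N.
have yxl : y *+ x l = - lincomb l e x by apply/eqP; rewrite -addr_eq0 addrC ex0.
have -> : y = - (y *+ (x l * b)).
  by apply/eqP; rewrite -addr_eq0 addrC -{2}[y]mulr1n -mulrnDr (mulrn_dvdp _ pb).
by rewrite mulrnA yxl mulNrn opprK lincombMn.
Qed.

Lemma basis_prefix (K : Q -> Prop) (t : nat -> Q) j : exists l e,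
  [/\ forall i, (i < l)%N -> K (e i), independent l e &
      forall i, (i < j)%N -> K (t i) -> exists x, t i = lincomb l e x].
Proof.
elim: j => [|j [l [e [eK indep_e span_e]]]]; first by exists 0%N, (fun=> 0).
have [[Ktj t_notin]|t_ok] := classic (K (t j) /\ ~ exists x, t j = lincomb l e x).
  exists l.+1, (catf l e (fun=> t j)); split.
  - by move=> i _; rewrite /catf; case: ltnP => il //; apply: eK.
  - exact: independent_catf1.
  move=> i; rewrite ltnS leq_eqVlt => /orP [/eqP -> _|ij Kti].
    by exists (fun i => i == l : nat); rewrite lincomb_delta // /catf ltnn.
  have [x ->] := span_e i ij Kti; exists (fun i => if (i < l)%N then x i else 0%N).
  by rewrite lincomb_catf1 ltnn mulr0n addr0; apply: eq_lincomb => i' ->.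
exists l, e; split=> // i; rewrite ltnS leq_eqVlt => /orP [/eqP -> Ktj|]; last exact: span_e.
by apply: NNPP => t_notin; apply: t_ok.
Qed.

Lemma basis_exists (K : Q -> Prop) t N : enumerates K t N ->
  exists l e, [/\ forall i, (i < l)%N -> K (e i), spans K l e & independent l e].
Proof.
move=> tK; have [l [e [eK indep_e span_e]]] := basis_prefix K t N.
exists l, e; split=> // g Kg; have [i iN gi] := tK g Kg.
by rewrite gi in Kg *; apply: span_e.
Qed.

End ElementaryAbelian.

(* Inserts a new pair (a, b) at positions 0 and k + 1, keeping the pairing
   of position i with position k + i. *)
Definition pair_insert (T : Type) k (a b : T) (f : nat -> T) i :=
  if i == 0%N then a else if (i <= k)%N then f i.-1 else if i == k.+1 then b else f i.-2.

Section PairInsert.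
Variables (T : Type) (k : nat) (a b : T) (f : nat -> T).

Lemma pair_insert_cases i : [\/ i = 0%N, (0 < i <= k)%N, i = k.+1 | (k.+1 < i)%N].
Proof.
case: (ltngtP i k.+1) => [ik|ki|->]; last by constructor 3.
  by case: (posnP i) => i0; [constructor 1 | constructor 2; lia].
by constructor 4.
Qed.
Lemma pair_insert0 : pair_insert k a b f 0 = a.
Proof. by []. Qed.
Lemma pair_insert_lo i : (0 < i <= k)%N -> pair_insert k a b f i = f i.-1.
Proof. by case/andP=> i0 ik; rewrite /pair_insert ik; case: i i0 {ik}. Qed.
Lemma pair_insert_mid : pair_insert k a b f k.+1 = b.
Proof. by rewrite /pair_insert /= ltnn eqxx. Qed.
Lemma pair_insert_hi i : (k.+1 < i)%N -> pair_insert k a b f i = f i.-2.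
Proof.
move=> ki; rewrite /pair_insert.
have -> : (i == 0%N) = false by lia.
have -> : (i <= k)%N = false by lia.
by have -> : (i == k.+1) = false by lia.
Qed.

End PairInsert.

Lemma pair_insertK k (x : nat -> nat) i :
  x i = pair_insert k (x 0%N) (x k.+1) (fun i => if (i < k)%N then x i.+1 else x i.+2) i.
Proof.
case: (pair_insert_cases k i) => [->|ik|->|ki]; rewrite ?pair_insert0 ?pair_insert_mid //.
  rewrite pair_insert_lo // (_ : (i.-1 < k)%N); last by lia.
  by case: i ik.
rewrite pair_insert_hi // (_ : (i.-2 < k)%N = false); last by lia.
by case: i ki => [|[|i]].
Qed.

Lemma catf_pair_insert (T : Type) k (u v : T) h e i :
  catf (2 * k.+1) (pair_insert k u v h) e i = pair_insert k u v (catf (2 * k) h e) i.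
Proof.
rewrite /catf; case: (pair_insert_cases k i) => [->|ik|->|ki].
- by rewrite !pair_insert0.
- rewrite !pair_insert_lo // (_ : (i < 2 * k.+1)%N); last by lia.
  by rewrite (_ : (i.-1 < 2 * k)%N) //; lia.
- by rewrite !pair_insert_mid (_ : (k.+1 < 2 * k.+1)%N) //; lia.
- rewrite !pair_insert_hi //; case: ifP => h1; case: ifP => h2 //; try lia.
  by congr e; lia.
Qed.

Lemma lincomb_pair_insert (Q : zmodType) k n (f : nat -> Q) x u v a b : (k <= n)%N ->
  lincomb n.+2 (pair_insert k u v f) (pair_insert k a b x) = u *+ a + v *+ b + lincomb n f x.
Proof.
move=> kn; have kn2 : (k.+2 <= n.+2)%N by rewrite !ltnS.
rewrite /lincomb (@big_cat_nat _ _ _ 1 0 n.+2) // big_nat1.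
rewrite (@big_cat_nat _ _ _ k.+1 1 n.+2) ?(ltnW kn2) //.
rewrite (@big_cat_nat _ _ _ k.+2 k.+1 n.+2) // big_nat1.
rewrite (@big_cat_nat _ _ _ k 0 n) // !big_add1 /= pair_insert0 !pair_insert_mid.
rewrite (@eq_big_nat _ _ _ 0 k _ (fun i => f i *+ x i)); last first.
  by move=> i /andP [_ ik]; rewrite !pair_insert_lo.
rewrite (@eq_big_nat _ _ _ k n _ (fun i => f i *+ x i)); last first.
  by move=> i /andP [ki _]; rewrite !pair_insert_hi //; lia.
by rewrite -addrA; congr (_ + _); rewrite addrCA.
Qed.

Section SymplecticBasis.
(* The prime is written p'.+2 so that 'I_p carries its canonical ring structure. *)
Variables (Q : zmodType) (p' : nat).
Local Notation p := p'.+2.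
Hypothesis p_pr : prime p.
Hypothesis Q_exp : forall x : Q, x *+ p = 0.
Variable om : Q -> Q -> 'I_p.
Hypothesis omDl : forall x y z, om (x + y) z = om x z + om y z.
Hypothesis omC : forall x y, om y x = - om x y.
Hypothesis omxx : forall x, om x x = 0.

Lemma om0l y : om 0 y = 0.
Proof. by apply: (@addrI _ (om 0 y)); rewrite -omDl !addr0. Qed.
Lemma omNl x y : om (- x) y = - om x y.
Proof. by apply: (@addrI _ (om x y)); rewrite -omDl !subrr om0l. Qed.
Lemma omMnl x y n : om (x *+ n) y = om x y *+ n.
Proof. by elim: n => [|n IH]; rewrite ?om0l // !mulrS omDl IH. Qed.
Lemma omNr x y : om x (- y) = - om x y.
Proof. by rewrite omC omNl -omC. Qed.
Lemma omMnr x y n : om x (y *+ n) = om x y *+ n.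
Proof. by rewrite omC omMnl -mulNrn -omC. Qed.
Lemma om_lincomb_eq0 n F x y :
  (forall i, (i < n)%N -> om (F i) y = 0) -> om (lincomb n F x) y = 0.
Proof.
move=> Fy; rewrite /lincomb (big_morph (om^~ y) (fun a b => omDl a b y) (om0l y)).
by rewrite big_nat_cond big1 // => i /andP [/andP [_ iln] _]; rewrite omMnl Fy // mul0rn.
Qed.

Lemma Zp_nat_eq0 n : (n%:R : 'I_p) = 0 <-> (p %| n)%N.
Proof.
split=> [/(congr1 val)|pn]; first by rewrite Zp_nat /= => /eqP.
by apply: val_inj; rewrite Zp_nat /= (eqP pn).
Qed.

Record symplectic_basis (K : Q -> Prop) k l (h e : nat -> Q) : Prop := SymplecticBasis {
  sb_hK : forall i, (i < 2 * k)%N -> K (h i);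
  sb_eK : forall i, (i < l)%N -> K (e i);
  sb_hh : forall i j, (i < j)%N -> (j < 2 * k)%N ->
    om (h i) (h j) = if j == (k + i)%N then 1 else 0;
  sb_eh : forall i j, (i < l)%N -> (j < 2 * k)%N -> om (e i) (h j) = 0;
  sb_ee : forall i j, (i < l)%N -> (j < l)%N -> om (e i) (e j) = 0;
  sb_spans : spans K (2 * k + l) (catf (2 * k) h e);
  sb_indep : independent p (2 * k + l) (catf (2 * k) h e)
}.

Definition om_perp (K : Q -> Prop) u v g := K g /\ om g u = 0 /\ om g v = 0.

Section InsertPair.
Variables (K : Q -> Prop) (u v : Q) (k l : nat) (h e : nat -> Q).
Hypothesis uv : om u v = 1.
Let F := catf (2 * k) h e.
Let h' := pair_insert k u v h.

Lemma pair_insert_om_hh :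
  (forall i, (i < 2 * k)%N -> om (h i) u = 0 /\ om (h i) v = 0) ->
  (forall i j, (i < j)%N -> (j < 2 * k)%N -> om (h i) (h j) = if j == (k + i)%N then 1 else 0) ->
  forall i j, (i < j)%N -> (j < 2 * k.+1)%N ->
    om (h' i) (h' j) = if j == (k.+1 + i)%N then 1 else 0.
Proof.
move=> hperp hh.
have hu i : (i < 2 * k)%N -> om u (h i) = 0 /\ om v (h i) = 0.
  by move=> /hperp [hu hv]; rewrite omC hu omC hv oppr0.
move=> i j; rewrite /h'.
case: (pair_insert_cases k i) => [->|hi|->|hi]; case: (pair_insert_cases k j) => [->|hj|->|hj];
  move=> ij jk; rewrite ?pair_insert0 ?pair_insert_mid ?(pair_insert_lo _ _ _ hi)
  ?(pair_insert_lo _ _ _ hj) ?(pair_insert_hi _ _ _ hi) ?(pair_insert_hi _ _ _ hj); try lia.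
- have [-> _] := hu j.-1 ltac:(lia).
  by have -> : (j == (k.+1 + 0)%N) = false by lia.
- by rewrite uv addn0 eqxx.
- have [-> _] := hu j.-2 ltac:(lia).
  by have -> : (j == (k.+1 + 0)%N) = false by lia.
- rewrite hh; try lia.
  have -> : (j == (k.+1 + i)%N) = false by lia.
  by have -> : (j.-1 == (k + i.-1)%N) = false by lia.
- have [_ ->] := hperp i.-1 ltac:(lia).
  by have -> : (k.+1 == (k.+1 + i)%N) = false by lia.
- rewrite hh; try lia.
  have [e1|e1] := eqVneq j (k.+1 + i)%N.
    by have -> : (j.-2 == (k + i.-1)%N) by lia.
  by have -> : (j.-2 == (k + i.-1)%N) = false by lia.
- have [_ ->] := hu j.-2 ltac:(lia).
  by have -> : (j == (k.+1 + k.+1)%N) = false by lia.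
- rewrite hh; try lia.
  have -> : (j == (k.+1 + i)%N) = false by lia.
  by have -> : (j.-2 == (k + i.-2)%N) = false by lia.
Qed.

Hypothesis K_sub : zmod_sub K.
Hypotheses (Ku : K u) (Kv : K v).

Lemma pair_insert_spans :
  spans (om_perp K u v) (2 * k + l) F -> spans K (2 * k.+1 + l) (catf (2 * k.+1) h' e).
Proof.
move=> spanF g Kg; have [_ [KD KN]] := K_sub.
pose a := nat_of_ord (om g v); pose b := nat_of_ord (om g u).
pose g' := g - u *+ a + v *+ b.
have g'_perp : om_perp K u v g'.
  have Kmul x n : K x -> K (x *+ n) by apply: zmod_sub_mulrn.
  split; first by apply: (KD); [apply: (KD) => //; apply/KN/Kmul | apply: Kmul].
  have vu : om v u = -1 by rewrite omC uv.
  rewrite /g' !omDl !omNl !omMnl !omxx vu uv !mul0rn subr0 addr0 mulNrn.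
  by rewrite /a /b !natr_Zp !subrr.
have [x ex] := spanF g' g'_perp.
exists (pair_insert k a (b * p'.+1) x).
rewrite (_ : 2 * k.+1 + l = (2 * k + l).+2)%N; last by lia.
rewrite (@eq_lincomb _ _ _ (pair_insert k u v F) _ (pair_insert k a (b * p'.+1) x)); last first.
  by move=> i _; rewrite catf_pair_insert.
rewrite lincomb_pair_insert; last by lia.
rewrite -ex /g' mulrnA -[_ *+ p'.+1](oppr_mulrn p_pr Q_exp).
by rewrite addrC -addrA (addrCA (v *+ b)) subrr addr0 subrK.
Qed.

Lemma pair_insert_independent :
  (forall i, (i < 2 * k + l)%N -> om (F i) u = 0 /\ om (F i) v = 0) ->
  independent p (2 * k + l) F -> independent p (2 * k.+1 + l) (catf (2 * k.+1) h' e).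
Proof.
move=> F_perp indF x.
pose y i := if (i < k)%N then x i.+1 else x i.+2.
rewrite (_ : 2 * k.+1 + l = (2 * k + l).+2)%N; last by lia.
rewrite (@eq_lincomb _ _ _ (pair_insert k u v F) _ (pair_insert k (x 0%N) (x k.+1) y)); last first.
  by move=> i _; rewrite catf_pair_insert -pair_insertK.
rewrite lincomb_pair_insert; last by lia.
move=> ex0; set S := lincomb (2 * k + l) F y in ex0.
have Su : om S u = 0 by apply: om_lincomb_eq0 => i /F_perp [].
have Sv : om S v = 0 by apply: om_lincomb_eq0 => i /F_perp [].
have px0 : (p %| x 0%N)%N.
  apply/Zp_nat_eq0; have := congr1 (om^~ v) ex0; rewrite /= !omDl om0l Sv addr0.
  by rewrite !omMnl uv omxx mul0rn addr0.
have pxk : (p %| x k.+1)%N.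
  apply/Zp_nat_eq0; have := congr1 (om^~ u) ex0; rewrite /= !omDl om0l Su addr0.
  by rewrite !omMnl (omC u v) uv omxx mul0rn add0r mulNrn => /eqP; rewrite oppr_eq0 => /eqP.
have S0 : S = 0 by move: ex0; rewrite (mulrn_dvdp Q_exp _ px0) (mulrn_dvdp Q_exp _ pxk) !add0r.
move=> i il; rewrite (pair_insertK k x i).
case: (pair_insert_cases k i) => [->|hi|->|hi]; rewrite ?pair_insert0 ?pair_insert_mid //.
  by rewrite pair_insert_lo //; apply: (indF y S0); lia.
by rewrite pair_insert_hi //; apply: (indF y S0); lia.
Qed.

Lemma symplectic_basis_insert :
  symplectic_basis (om_perp K u v) k l h e -> symplectic_basis K k.+1 l h' e.
Proof.
case=> hK eK hh eh ee spanF indF.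
have F_perp i : (i < 2 * k + l)%N -> om_perp K u v (F i).
  by move=> il; rewrite /F /catf; case: ifP => ik; [apply: hK | apply: eK; lia].
have hK' i : (i < 2 * k)%N -> K (h i) by move/hK => [].
split.
- move=> i ik; rewrite /h'.
  case: (pair_insert_cases k i) => [->|hi|->|hi]; rewrite ?pair_insert0 ?pair_insert_mid //.
    by rewrite pair_insert_lo //; apply: hK'; lia.
  by rewrite pair_insert_hi //; apply: hK'; lia.
- by move=> i /eK [].
- by apply: pair_insert_om_hh => // i /hK [_ []].
- move=> i j il jk; have [_ [eu ev]] := eK i il; rewrite /h'.
  case: (pair_insert_cases k j) => [->|hj|->|hj]; rewrite ?pair_insert0 ?pair_insert_mid //.
    by rewrite pair_insert_lo // eh //; lia.
  by rewrite pair_insert_hi // eh //; lia.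
- exact: ee.
- exact: pair_insert_spans.
- by apply: pair_insert_independent => // i /F_perp [_].
Qed.

End InsertPair.

Lemma om_perp_zmod_sub K u v : zmod_sub K -> zmod_sub (om_perp K u v).
Proof.
case=> K0 [KD KN]; split; first by rewrite /om_perp !om0l.
split=> [x y [Kx [xu xv]] [Ky [yu yv]] | x [Kx [xu xv]]].
  by split; [exact: KD | rewrite !omDl xu yu xv yv addr0].
by split; [exact: KN | rewrite !omNl xu xv oppr0].
Qed.

Lemma om_normalize K u w : zmod_sub K -> K w -> om u w <> 0 ->
  exists2 v, K v & om u v = 1.
Proof.
move=> K_sub Kw uw_neq0; have [_ [_ KN]] := K_sub.
have /(modp_inverse p_pr) [b pb] : ~~ (p %| om u w)%N.
  by apply/negP => /(Zp_nat_eq0 _).2; rewrite natr_Zp.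
exists (- (w *+ b)); first by apply/KN; apply: zmod_sub_mulrn.
rewrite omNr omMnr -{1}(natr_Zp (om u w)) -mulrnA.
by move/(Zp_nat_eq0 _).2: pb; rewrite natrD => /eqP; rewrite addr_eq0 => /eqP ->; rewrite opprK.
Qed.

Lemma isotropic_symplectic_basis K t N : enumerates K t N ->
  (forall x y, K x -> K y -> om x y = 0) -> exists l e, symplectic_basis K 0 l (fun=> 0) e.
Proof.
move=> tK K_iso; have [l [e [eK span_e indep_e]]] := basis_exists p_pr Q_exp tK.
have catfE : catf (2 * 0) (fun=> 0) e =1 e by move=> i; rewrite /catf muln0 subn0.
exists l, e; split => //.
- by move=> i j /eK Kei /eK; apply: K_iso.
- by move=> g /span_e [x ->]; exists x; apply: eq_lincomb => i _; rewrite catfE.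
- move=> x; rewrite (@eq_lincomb _ _ _ e _ x) => [/indep_e|i _]; last by rewrite catfE.
  by rewrite muln0.
Qed.

Theorem symplectic_basis_exists N K t : zmod_sub K -> enumerates K t N ->
  exists k l h e, symplectic_basis K k l h e.
Proof.
elim/ltn_ind: N K t => N IH K t K_sub tK.
have [[u [w [Ku [Kw uw]]]]|K_iso] := classic (exists u w, K u /\ K w /\ om u w <> 0); last first.
  have [l [e Be]] : exists l e, symplectic_basis K 0 l (fun=> 0) e.
    apply: isotropic_symplectic_basis tK _ => x y Kx Ky.
    by apply: NNPP => xy; apply: K_iso; exists x, y.
  by exists 0%N, l, (fun=> 0), e.
have [v Kv uv] := om_normalize K_sub Kw uw.
have [j0 j0N uj0] := tK u Ku.
have perp_tK : enumerates (om_perp K u v) (fun i => t (if (i < j0)%N then i else i.+1)) N.-1.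
  apply: enumerates_skip tK j0N _ => x [Kx [_ xv]]; split=> // xt.
  by move: xv; rewrite xt -uj0 uv => /eqP; rewrite oner_eq0.
have [k [l [h [e Bperp]]]] := IH N.-1 ltac:(lia) _ _ (om_perp_zmod_sub u v K_sub) perp_tK.
by exists k.+1, l, (pair_insert k u v h), e; apply: symplectic_basis_insert.
Qed.

End SymplecticBasis.

Local Close Scope ring_scope.

Lemma modp_eq_small p a b : (a < p)%N -> (b < p)%N -> (p %| a + b * p.-1)%N -> a = b.
Proof.
case: p => // p ap bp /dvdnP [q e].
have /(congr1 (modn^~ p.+1)) : (a + b * p.+1 = q * p.+1 + b)%N by rewrite -e /=; lia.
by rewrite modnMDl addnC modnMDl !modn_small.
Qed.

Section CommutatorForm.
Variables (G : group) (p' : nat) (M : G -> Prop) (c : nat -> G).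
Local Notation p := p'.+2.
Local Notation "0g" := (gzero G).
Hypothesis p_pr : prime p.
Hypothesis c0_neq0 : c 0 <> 0g.
Hypothesis c0_order : gmul p (c 0) = 0g.
Hypothesis cS : forall n, gmul p (c n.+1) = c n.
Hypothesis MP : forall g, M g <-> exists n a, g = gmul a (c n).
Hypothesis M_central : forall g m, M m -> m +g g = g +g m.
Hypothesis M_quot : abelian_quotient M.
Hypothesis M_exponent : forall g, M (gmul p g).
Local Notation Q := (quot M_quot).

Lemma commMl (m z : G) : M m -> comm m z = 0g.
Proof. by move=> Mm; apply/comm_eq0/M_central. Qed.

Lemma commDl_central (a b z : G) : comm (a +g b) z = comm a z +g comm b z.
Proof.
have Mbz := aq_comm M_quot b z.
by rewrite commDl -(M_central a Mbz) gaddrK M_central.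
Qed.

Lemma comm_gmull n (a z : G) : comm (gmul n a) z = gmul n (comm a z).
Proof.
elim: n => [|n IH] /=; last by rewrite commDl_central IH.
by apply: commMl; case: M_quot => [[[]]].
Qed.

Lemma comm_congM (x x' y y' : G) : congM M x x' -> congM M y y' -> comm x y = comm x' y'.
Proof.
have congl a a' b : congM M a a' -> comm a b = comm a' b.
  by move=> aa'; rewrite -(gaddNKr a a') commDl_central (commMl _ aa') gaddr0.
by move=> /congl -> /congl yy'; rewrite commC yy' -commC.
Qed.

Lemma comm_socle (x y : G) : exists2 n, (n < p)%N & comm x y = gmul n (c 0).
Proof.
have pxy : gmul p (comm x y) = 0g by rewrite -comm_gmull commMl.
have [n ->] := quasi_cyclic_socle p_pr c0_neq0 c0_order cS MP (aq_comm M_quot x y) pxy.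
by exists (n %% p)%N; [apply: ltn_pmod | apply: gmul_c0_mod].
Qed.

Definition comm_index (x y : G) : nat := s2val (cid2 (comm_socle x y)).

Lemma comm_indexP (x y : G) : comm x y = gmul (comm_index x y) (c 0).
Proof. exact: s2valP' (cid2 (comm_socle x y)). Qed.

Definition comm_form (a b : Q) : 'I_p := ((comm_index (qval a) (qval b))%:R)%R.

Let Zp_nat_mod m n : m = n %[mod p] -> (m%:R : 'I_p)%R = (n%:R)%R.
Proof. by move=> e; apply: val_inj; rewrite !Zp_nat /= e. Qed.

Lemma comm_form_gmul a b n :
  comm (qval a) (qval b) = gmul n (c 0) -> comm_form a b = (n%:R)%R.
Proof. by rewrite comm_indexP => /(gmul_c0_inj p_pr c0_neq0 c0_order cS); apply: Zp_nat_mod. Qed.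

Lemma comm_formDl x y z : comm_form (x + y)%R z = (comm_form x z + comm_form y z)%R.
Proof.
rewrite -natrD; apply: comm_form_gmul; rewrite gmulD -!comm_indexP -commDl_central.
by apply: comm_congM; [apply: qval_qproj | apply: congM_refl].
Qed.

Lemma comm_formC x y : comm_form y x = (- comm_form x y)%R.
Proof.
apply/eqP; rewrite -addr_eq0 -natrD; apply/eqP; rewrite -[0%R]/(0%:R)%R.
by apply/Zp_nat_mod/(gmul_c0_inj p_pr c0_neq0 c0_order cS); rewrite gmulD -!comm_indexP commC gaddN.
Qed.

Lemma comm_formxx x : comm_form x x = 0%R.
Proof. exact: (comm_form_gmul (n := 0)) (commxx _). Qed.

Lemma quot_exponent (a : Q) : (a *+ p)%R = 0%R.
Proof. by rewrite -[a]qvalK -qproj_gmul; apply/qproj_eq0. Qed.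

Hypothesis M_divisible : divisible_sub M.

Definition lift_root (q : Q) : G :=
  sval (cid (M_divisible (M_exponent (qval q)) (isT : (0 < p)%N))).

Lemma lift_rootP q : M (lift_root q) /\ gmul p (lift_root q) = gmul p (qval q).
Proof. by rewrite /lift_root; case: cid. Qed.

Definition lift (q : Q) : G := qval q +g -g lift_root q.

Lemma lift_congM q : congM M (lift q) (qval q).
Proof.
by rewrite /congM /lift goppD goppK gaddrNK; case: (lift_rootP q).
Qed.

Lemma qproj_lift q : qproj M_quot (lift q) = q.
Proof. by rewrite -[RHS]qvalK; apply/qprojP/lift_congM. Qed.

Lemma lift_order q : gmul p (lift q) = 0g.
Proof.
have [Mr pr] := lift_rootP q.
have MNr : M (-g lift_root q) by case: M_quot => [[[_ [_ MN]] _]] _; apply: MN.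
by rewrite /lift (gmulDl p (esym (M_central _ MNr))) gmulN pr gaddrN.
Qed.

Lemma lift_neq0 q : q <> 0%R -> lift q <> 0g.
Proof.
move=> q_neq0 lq0; apply: q_neq0; rewrite -(qproj_lift q) lq0.
by apply/qproj_eq0; case: M_quot => [[[]]].
Qed.

Lemma comm_lift a b : comm (lift a) (lift b) = gmul (comm_form a b) (c 0).
Proof.
rewrite (comm_congM (lift_congM a) (lift_congM b)) comm_indexP.
by rewrite (gmul_c0_mod c0_order) /comm_form Zp_nat.
Qed.

Lemma qproj_normal_form k l (h e : nat -> Q) x y :
  qproj M_quot (gsum (2 * k) (fun i => gmul (x i) (lift (h i)))
                +g gsum l (fun i => gmul (y i) (lift (e i)))) =
  lincomb (2 * k + l) (catf (2 * k) h e) (catf (2 * k) x y).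
Proof.
rewrite lincomb_catf qprojD !qproj_gsum; congr (_ + _)%R.
  by apply: eq_big_nat => i /andP [_ ik]; rewrite qproj_gmul qproj_lift /catf ik.
by apply: eq_bigr => i _; rewrite qproj_gmul qproj_lift /catf ltnNge leq_addr /= addKn.
Qed.

Section NormalForm.
Variables (k l : nat) (h e : nat -> Q).
Hypothesis hl_basis : symplectic_basis comm_form (fun=> True) k l h e.
Local Notation normal_form m x y :=
  (m +g gsum (2 * k) (fun i => gmul (x i) (lift (h i)))
     +g gsum l (fun i => gmul (y i) (lift (e i)))).

Lemma normal_form_exists g : exists m x y,
  [/\ M m, forall i, (x i < p)%N, forall i, (y i < p)%N & g = normal_form m x y].
Proof.
have [z ez] := sb_spans hl_basis (g := qproj M_quot g) I.
pose x i := (z i %% p)%N; pose y i := (z (2 * k + i) %% p)%N.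
pose A := gsum (2 * k) (fun i => gmul (x i) (lift (h i))).
pose B := gsum l (fun i => gmul (y i) (lift (e i))).
have qAB : qproj M_quot (A +g B) = qproj M_quot g.
  rewrite qproj_normal_form ez /lincomb; apply: eq_big_nat => i _.
  rewrite [RHS](mulrn_modp quot_exponent) /catf; case: ifP => // ik.
  by rewrite /y subnKC // leqNgt ik.
exists (g +g -g (A +g B)), x, y; split; try by move=> i; apply: ltn_pmod.
  by apply/(qproj_eq0 M_quot); rewrite qprojD qprojN qAB subrr.
by rewrite -gaddA gaddrNK.
Qed.

Lemma normal_form_unique m x y m' x' y' : M m -> M m' ->
  (forall i, x i < p)%N -> (forall i, y i < p)%N ->
  (forall i, x' i < p)%N -> (forall i, y' i < p)%N ->
  normal_form m x y = normal_form m' x' y' ->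
  [/\ m = m', forall i, (i < 2 * k)%N -> x i = x' i & forall i, (i < l)%N -> y i = y' i].
Proof.
move=> Mm Mm' xp yp x'p y'p e_nf.
pose X := catf (2 * k) x y; pose X' := catf (2 * k) x' y'.
have eqX : lincomb (2 * k + l) (catf (2 * k) h e) X = lincomb (2 * k + l) (catf (2 * k) h e) X'.
  rewrite -!qproj_normal_form; move/(congr1 (qproj M_quot)): e_nf.
  rewrite -!gaddA (qprojD _ m) (qprojD _ m').
  by rewrite (proj2 (qproj_eq0 _ m) Mm) (proj2 (qproj_eq0 _ m') Mm') !add0r.
have XX i : (i < 2 * k + l)%N -> X i = X' i.
  move=> il; apply: (@modp_eq_small p); rewrite ?/X ?/X' /catf; try by case: ifP.
  apply: (sb_indep hl_basis (x := fun i => X i + X' i * p.-1)%N) => //.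
  by rewrite -lincombD -lincombMn -(oppr_mulrn p_pr quot_exponent) eqX subrr.
have xx i : (i < 2 * k)%N -> x i = x' i.
  by move=> ik; have := XX i (ltn_addr l ik); rewrite /X /X' /catf ik.
have yy i : (i < l)%N -> y i = y' i.
  move=> il; have := XX (2 * k + i)%N; rewrite ltn_add2l => /(_ il).
  by rewrite /X /X' /catf ltnNge leq_addr /= addKn.
have ex : gsum (2 * k) (fun i => gmul (x i) (lift (h i))) =
          gsum (2 * k) (fun i => gmul (x' i) (lift (h i))) by apply: gsum_eq => i /xx ->.
have ey : gsum l (fun i => gmul (y i) (lift (e i))) =
          gsum l (fun i => gmul (y' i) (lift (e i))) by apply: gsum_eq => i /yy ->.
by split=> //; move: e_nf; rewrite ex ey => /gaddIr /gaddIr.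
Qed.

Lemma Gk_times_Hl_lift :
  Gk_times_Hl p M (c 0) k l (fun i => lift (h i)) (fun i => lift (e i)).
Proof.
have basis_neq0 := independent_neq0 p_pr (sb_indep hl_basis).
have h_neq0 i : (i < 2 * k)%N -> h i <> 0%R.
  by move=> ik; have := basis_neq0 i (ltn_addr l ik); rewrite /catf ik.
have e_neq0 i : (i < l)%N -> e i <> 0%R.
  move=> il; have := basis_neq0 (2 * k + i)%N; rewrite ltn_add2l => /(_ il).
  by rewrite /catf ltnNge leq_addr /= addKn.
split; [|split; [|split; [|split; [|split; [|split; [|split; [|split]]]]]]].
- by move=> i ik; split; [apply: lift_order | apply/lift_neq0/h_neq0].
- by move=> i m _ Mm; rewrite (M_central _ Mm).
- by move=> i j ij jk; rewrite comm_lift (sb_hh hl_basis) //; case: eqP; rewrite ?gmul1.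
- by move=> i il; split; [apply: lift_order | apply/lift_neq0/e_neq0].
- by move=> i m _ Mm; rewrite (M_central _ Mm).
- by move=> i j il jk; apply/comm_eq0; rewrite comm_lift (sb_eh hl_basis).
- by move=> i j il jl; apply/comm_eq0; rewrite comm_lift (sb_ee hl_basis).
- by move=> g; have [m [x [y [Mm xp yp ->]]]] := normal_form_exists g; exists m, x, y.
- move=> m x y m' x' y' Mm Mm' xp yp x'p y'p e_nf.
  by have [-> xx yy] := normal_form_unique Mm Mm' xp yp x'p y'p e_nf.
Qed.

End NormalForm.

Lemma Gk_times_Hl_exists n (t : nat -> G) :
  (forall g, exists2 i, (i < n)%N & M (-g t i +g g)) ->
  exists k l h e, Gk_times_Hl p M (c 0) k l h e.
Proof.
move=> tM; have [k [l [h [e B]]]] :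
    exists k l h e, symplectic_basis comm_form (fun=> True) k l h e.
  apply: (symplectic_basis_exists p_pr quot_exponent comm_formDl comm_formC comm_formxx
    (t := fun i => qproj M_quot (t i))) => [|q _]; first by split.
  exact: qproj_enumerates.
by exists k, l, (fun i => lift (h i)), (fun i => lift (e i)); apply: Gk_times_Hl_lift.
Qed.

End CommutatorForm.

Theorem proposition3p1 (p : nat) (G : group) (M : G -> Prop) :
  prime p ->
  nilpotent G ->
  normal M -> is_bottom M -> quasi_cyclic p M ->
  top_finite_elem_abelian p M ->
  exists a1 : G, M a1 /\ has_order p a1 /\
  exists (k l : nat) (h e : nat -> G), Gk_times_Hl p M a1 k l h e.
Proof.
move=> p_pr G_nil M_normal [_ [M_abelian [M_divisible _]]].
move=> [c [c0_neq0 [c0_order [cS MP]]]] [[n [t tM]] [M_exponent M_comm]].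
case: p p_pr c0_order cS MP M_exponent => [|[|p']] // p_pr c0_order cS MP M_exponent.
have M_central := bottom_central p_pr c0_neq0 c0_order cS MP M_normal M_abelian M_divisible G_nil.
exists (c 0); split; first by apply/MP; exists 0, 1; rewrite gmul1.
split; first by [].
exact: (Gk_times_Hl_exists p_pr c0_neq0 c0_order cS MP M_central
          (AbelianQuotient M_normal M_comm) M_exponent M_divisible tM).
Qed.
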